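(* Let $G$ be a finite simple graph without isolated vertices, and consider any position of the Disjoint Domination Game on $G$ in which neither (s* ) nor (d* ) holds. Then the player to move has at least one legal move.
   Context: For a vertex $v$, $N[v]$ denotes its closed neighborhood. In the Disjoint Domination Game on $G$, two players (Dom and Sepy) alternately color vertices with colors from $\{p,b\}$ (either player may use either color); $V_p,V_b$ denote the current sets of vertices of each color. A legal move is a choice of a vertex $v$ and a color $c$ such that (i) $v$ is uncolored and (ii) some $u\in N[v]$ satisfies $N[u]\cap V_c=\emptyset$; then $v$ gets color $c$. Condition (s* ): some vertex $v$ has $N[v]\subseteq V_p$ or $N[v]\subseteq V_b$. Condition (d* ): both $V_p$ and $V_b$ are dominating sets of $G$. *)

From mathcomp Require Import all_boot.
Set Implicit Arguments. Unset Strict Implicit. Unset Printing Implicit Defensive.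

Definition simple_graph (T : finType) (e : rel T) : Prop :=
  symmetric e /\ irreflexive e.

Definition no_isolated (T : finType) (e : rel T) : Prop :=
  forall v : T, exists u : T, e v u.

Definition cnbhd (T : finType) (e : rel T) (v : T) : {set T} :=
  [set u | (u == v) || e v u].

Inductive color := cp | cb.

Record position (T : finType) := Pos { Vp : {set T}; Vb : {set T} }.

Definition Vc (T : finType) (P : position T) (c : color) : {set T} :=
  match c with cp => Vp P | cb => Vb P end.

Definition uncolored (T : finType) (P : position T) (v : T) : bool :=
  (v \notin Vp P) && (v \notin Vb P).

Definition legal_move (T : finType) (e : rel T) (P : position T) (v : T) (c : color) : Prop :=
  uncolored P v /\
  exists2 u, u \in cnbhd e v & cnbhd e u :&: Vc P c = set0.

Definition play (T : finType) (P : position T) (v : T) (c : color) : position T :=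
  match c with
  | cp => Pos (v |: Vp P) (Vb P)
  | cb => Pos (Vp P) (v |: Vb P)
  end.

(* Positions of the game: reachable from the empty colouring by legal moves
   (either player may make any legal move, so who moved is irrelevant). *)
Inductive reachable (T : finType) (e : rel T) : position T -> Prop :=
  | reach0 : reachable e (Pos set0 set0)
  | reachS P v c : reachable e P -> legal_move e P v c -> reachable e (play P v c).

Definition dominating (T : finType) (e : rel T) (D : {set T}) : Prop :=
  forall v : T, cnbhd e v :&: D != set0.

Definition cond_s (T : finType) (e : rel T) (P : position T) : Prop :=
  exists v : T, (cnbhd e v \subset Vp P) \/ (cnbhd e v \subset Vb P).

Definition cond_d (T : finType) (e : rel T) (P : position T) : Prop :=
  dominating e (Vp P) /\ dominating e (Vb P).

From mathcomp Require Import all_boot.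

Set Implicit Arguments.
Unset Strict Implicit.
Unset Printing Implicit Defensive.

(* If (d-star) fails, some closed neighbourhood N[w] misses a colour class V_c. An
   uncoloured vertex v of N[w] then has the legal move (v, c), witnessed by
   w ∈ N[v]; and if N[w] has no uncoloured vertex, it lies entirely inside
   the other colour class, which is (s-star). *)

Definition other_color (c : color) : color :=
  match c with cp => cb | cb => cp end.

Lemma cnbhd_sym (T : finType) (e : rel T) (u v : T) :
  symmetric e -> (u \in cnbhd e v) = (v \in cnbhd e u).
Proof. by move=> sym; rewrite !inE eq_sym sym. Qed.

Lemma uncoloredN_other (T : finType) (P : position T) (c : color) (v : T) :
  ~~ uncolored P v -> v \notin Vc P c -> v \in Vc P (other_color c).
Proof. by case: c; rewrite /uncolored /= negb_and !negbK => /orP [] ->. Qed.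

Lemma not_cond_d_undominated (T : finType) (e : rel T) (P : position T) :
  ~ cond_d e P -> exists c (w : T), cnbhd e w :&: Vc P c = set0.
Proof.
move=> nd.
have [Dp|] := boolP [forall v, cnbhd e v :&: Vp P != set0]; last first.
  by case/forallPn=> w /negbNE/eqP Hw; exists cp, w.
have [Db|] := boolP [forall v, cnbhd e v :&: Vb P != set0]; last first.
  by case/forallPn=> w /negbNE/eqP Hw; exists cb, w.
by case: nd; split=> v; [exact: (forallP Dp) | exact: (forallP Db)].
Qed.

Lemma legal_move_undominated (T : finType) (e : rel T) (P : position T)
    (c : color) (w : T) :
  symmetric e -> ~ cond_s e P -> cnbhd e w :&: Vc P c = set0 ->
  exists v, legal_move e P v c.
Proof.
move=> sym ns Hw.
have [/existsP [v /andP [vw unc]]|/existsPn colored] :=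
  boolP [exists v in cnbhd e w, uncolored P v].
  by exists v; split=> //; exists w; rewrite // cnbhd_sym.
have notc x : x \in cnbhd e w -> x \notin Vc P c.
  by move=> xw; apply/negP=> xc; have := in_set0 x; rewrite -Hw inE xw xc.
have sub : cnbhd e w \subset Vc P (other_color c).
  apply/subsetP=> x xw; apply: uncoloredN_other (notc x xw).
  by have := colored x; rewrite xw.
by case: ns; exists w; case: c {Hw notc} sub => /= sub; [right | left].
Qed.

Theorem lemma1 (T : finType) (e : rel T) :
  simple_graph e -> no_isolated e ->
  forall P : position T, reachable e P ->
  ~ cond_s e P -> ~ cond_d e P ->
  exists (v : T) (c : color), legal_move e P v c.
Proof.
move=> [sym _] _ P _ ns nd.
have [c [w Hw]] := not_cond_d_undominated nd.
have [v mv] := legal_move_undominated sym ns Hw.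
by exists v, c.
Qed.
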